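(* Let $m\in\mathbb{N}$ and let $\{W(t)\}_{t=0}^\infty$ be the standard random walk on the discrete hypercube $\{0,1\}^m$ starting at the origin: $W(0)=0$, and for each $t\in\mathbb{N}$ the vector $W(t)$ is obtained from $W(t-1)$ by choosing an index $i\in\{1,\ldots,m\}$ uniformly at random (independently of the past) and replacing the $i$-th coordinate $W(t-1,i)$ by $1-W(t-1,i)$, leaving the other coordinates unchanged. Then for every $t\in\mathbb{N}$, $$\Pr[W(t)=0]\le 2\left(\frac{t}{m}\right)^{t/2}.$$ *)

From HB Require Import structures.
From mathcomp Require Import all_boot all_order all_algebra.
From mathcomp Require Import all_classical all_reals all_analysis.
Set Implicit Arguments. Unset Strict Implicit. Unset Printing Implicit Defensive.
Import Order.TTheory GRing.Theory Num.Theory.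
Local Open Scope ring_scope.

(* A point of the hypercube {0,1}^m: coordinates are booleans (false = 0, true = 1),
   indexed by 'I_m (i.e. {1..m} shifted to {0..m-1}). *)
Definition cube (m : nat) := {ffun 'I_m -> bool}.

Definition origin (m : nat) : cube m := [ffun => false].

Definition flip (m : nat) (x : cube m) (i : 'I_m) : cube m :=
  [ffun j => if j == i then ~~ x j else x j].

Definition walk (m : nat) (s : seq 'I_m) : cube m :=
  foldl (@flip m) (origin m) s.

(* The t index choices are i.i.d. uniform on 'I_m, i.e. the sequence
   (i_1,...,i_t) is uniform on t.-tuple 'I_m.  Probability that W(t) = 0: *)
Definition prob_return (R : numFieldType) (m t : nat) : R :=
  (#|[set s : t.-tuple 'I_m | walk s == origin m]|)%:R
  / (#|{: t.-tuple 'I_m}|)%:R.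

From HB Require Import structures.
From mathcomp Require Import all_boot all_order all_algebra.
From mathcomp Require Import all_classical all_reals all_analysis.
From mathcomp Require Import zify.
Import Order.TTheory GRing.Theory Num.Theory.

(* Count the index sequences of length n that lead from x back to the origin
   and induct on n, tracking the Hamming weight d of x: the count is at most
   n^d (n m)^((n - d)/2).  A step lowers the weight along one of the d set
   coordinates or raises it along one of at most m others, and Bernoulli's
   inequality d n^(d-1) + n^d <= (n+1)^d closes the induction.  At the origin
   this gives (t m)^(t/2) returning sequences out of m^t. *)

Lemma card_tuple_cons (T : finType) n (P : pred (n.+1.-tuple T)) :
  #|[set s | P s]| = \sum_(a : T) #|[set s : n.-tuple T | P [tuple of a :: s]]|.
Proof.
rewrite -sum1dep_card (reindex (fun p : T * n.-tuple T => [tuple of p.1 :: p.2])) /=; last first.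
  exists (fun s : n.+1.-tuple T => (thead s, behead_tuple s)).
    by move=> [a s] _; congr pair; apply: val_inj.
  by move=> s _; rewrite [RHS]tuple_eta.
rewrite -(pair_big_dep xpredT (fun a (s : n.-tuple T) => P [tuple of a :: s])
                       (fun _ _ => 1)) /=.
by apply: eq_bigr => a _; rewrite sum1dep_card.
Qed.

Lemma bernoulli_expn d n : d * n ^ d.-1 + n ^ d <= n.+1 ^ d.
Proof.
case: d => [|d] //=; elim: d => [|d IHd]; first by rewrite expn0 !expn1; lia.
move: IHd; rewrite !expnS; set a := n ^ d; set b := n.+1 ^ d.
nia.
Qed.

Section Hypercube.
Variable m : nat.

Definition npaths n (x : cube m) : nat :=
  #|[set s : n.-tuple 'I_m | foldl (@flip m) x s == origin m]|.

Definition weight (x : cube m) : nat := #|[set i | x i]|.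

Lemma npaths0 (x : cube m) : npaths 0 x = (x == origin m).
Proof.
rewrite /npaths (@eq_finset _ _ (fun _ => x == origin m)); last first.
  by move=> s; rewrite tuple0.
by case: eqP => _; rewrite ?cardsT ?card_tuple ?cards0.
Qed.

Lemma npathsS n (x : cube m) : npaths n.+1 x = \sum_(a : 'I_m) npaths n (flip x a).
Proof. exact: card_tuple_cons. Qed.

Lemma weight_eq0 (x : cube m) : (weight x == 0) = (x == origin m).
Proof.
rewrite cards_eq0; apply/eqP/eqP => [x0|->].
  apply/ffunP => i; rewrite ffunE; apply/negbTE/negP => xi.
  by move/setP/(_ i): x0; rewrite !inE xi.
by apply/setP => i; rewrite !inE ffunE.
Qed.

Lemma weight_origin : weight (origin m) = 0.
Proof. by apply/eqP; rewrite weight_eq0. Qed.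

Lemma weight_flipT {x : cube m} {a : 'I_m} : x a -> (weight (flip x a)).+1 = weight x.
Proof.
move=> xa; rewrite /weight; have -> : [set i | flip x a i] = [set i | x i] :\ a.
  by apply/setP => i; rewrite !inE ffunE; case: eqP => [->|]; rewrite ?xa.
by rewrite [RHS](cardsD1 a) inE xa.
Qed.

Lemma weight_flipF {x : cube m} {a : 'I_m} : ~~ x a -> weight (flip x a) = (weight x).+1.
Proof.
move=> xa; rewrite /weight; have -> : [set i | flip x a i] = a |: [set i | x i].
  by apply/setP => i; rewrite !inE ffunE; case: eqP => [->|]; rewrite ?(negbTE xa).
by rewrite cardsU1 inE xa.
Qed.

Lemma npaths_eq0 n (x : cube m) : n < weight x -> npaths n x = 0.
Proof.
elim: n x => [|n IHn] x lt_n_x.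
  by rewrite npaths0 -weight_eq0; case: weight lt_n_x.
rewrite npathsS big1 // => a _; apply: IHn.
case xa: (x a); last by rewrite weight_flipF ?xa //; lia.
by move: lt_n_x; rewrite -(weight_flipT xa).
Qed.

Definition npaths_bound n d := n ^ d * (n * m) ^ (n - d)./2.

Section InductionStep.
Variable n : nat.
Hypothesis npaths_le : forall y, npaths n y <= npaths_bound n (weight y).
Variable x : cube m.

Lemma sum_npaths_down :
  \sum_(a | x a) npaths n (flip x a) <=
  weight x * (n ^ (weight x).-1 * (n * m) ^ (n.+1 - weight x)./2).
Proof.
rewrite -[weight x in X in _ <= X * _]/#|[set a | x a]| -sum_nat_cond_const.
apply: leq_sum => a xa; apply: leq_trans (npaths_le _) _.
by rewrite /npaths_bound -(weight_flipT xa) subSS.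
Qed.

Lemma sum_npaths_up :
  \sum_(a | ~~ x a) npaths n (flip x a) <=
  n ^ weight x * (n * m) ^ (n.+1 - weight x)./2.
Proof.
set d := weight x; set q := (n.+1 - d)./2.
have [lt_n_d|le_d_n] := ltnP n d.+1.
  by rewrite big1 // => a xa; rewrite npaths_eq0 // weight_flipF.
have q_gt0 : 0 < q by rewrite /q; lia.
have step a : ~~ x a -> npaths n (flip x a) <= n ^ d.+1 * (n * m) ^ q.-1.
  move=> xa; apply: leq_trans (npaths_le _) _.
  by rewrite /npaths_bound weight_flipF // (_ : (n - d.+1)./2 = q.-1) // /q; lia.
apply: leq_trans (leq_sum _ step) _; rewrite sum_nat_cond_const.
apply: leq_trans (leq_mul (max_card _) (leqnn _)) _.
rewrite card_ord -(prednK q_gt0) !expnS.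
set a := n ^ d; set b := (n * m) ^ q.-1.
nia.
Qed.

End InductionStep.

Lemma npaths_le n (x : cube m) : npaths n x <= npaths_bound n (weight x).
Proof.
elim: n x => [|n IHn] x; first by rewrite npaths0 -weight_eq0 /npaths_bound; case: weight.
rewrite npathsS (bigID (fun a => x a)) /=.
apply: leq_trans (leq_add (sum_npaths_down _ IHn x) (sum_npaths_up _ IHn x)) _.
rewrite mulnA -mulnDl /npaths_bound; apply: leq_mul; first exact: bernoulli_expn.
by case: (_./2) => // q; rewrite leq_exp2r // leq_mul2r leqnSn orbT.
Qed.

End Hypercube.

Local Open Scope ring_scope.

Lemma prob_returnE (R : numFieldType) m t :
  prob_return R m t = (npaths m t (origin m))%:R / (m ^ t)%:R.
Proof. by rewrite /prob_return card_tuple card_ord. Qed.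

Lemma powR_mul_sqr (R : realType) (x y r : R) : 0 <= x -> 0 <= y ->
  (x * y ^+ 2) `^ (r / 2) = x `^ (r / 2) * y `^ r.
Proof.
move=> x_ge0 y_ge0; rewrite powRM ?exprn_ge0 // -powR_mulrn // -powRrM [_ * (r / 2)]mulrC.
by rewrite -mulrA mulVf ?mulr1 // pnatr_eq0.
Qed.

Lemma natrX_half_le_powR (R : realType) (a t : nat) : (0 < a)%N ->
  ((a ^ t./2)%:R : R) <= a%:R `^ (t%:R / 2).
Proof.
move=> a_gt0; rewrite natrX -powR_mulrn // ler_powR ?ler1n //.
by rewrite ler_pdivlMr // -natrM ler_nat muln2 -{2}(odd_double_half t) leq_addl.
Qed.

Lemma prob_return_le (R : realType) m t : (0 < m)%N ->
  prob_return R m t <= (t%:R / m%:R) `^ (t%:R / 2).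
Proof.
move=> m_gt0; have := npaths_le m t (origin m).
rewrite prob_returnE /npaths_bound weight_origin expn0 mul1n subn0.
set N := npaths m t (origin m) => le_N.
have [t0|t_gt0] := posnP t.
  by move: le_N; rewrite t0 mulr0n !mul0r powRr0 expn0 divr1 -(ler_nat R N 1).
rewrite natrX ler_pdivrMr ?exprn_gt0 ?ltr0n // -powR_mulrn ?ler0n //.
rewrite -powR_mul_sqr ?divr_ge0 ?ler0n // expr2 mulrA divfK ?pnatr_eq0 -?lt0n //.
by rewrite -natrM (le_trans _ (natrX_half_le_powR _ _ _ _)) ?ler_nat ?muln_gt0 ?t_gt0.
Qed.

Theorem lemma2p10 (R : realType) (m t : nat) (hm : (0 < m)%N) :
  prob_return R m t <= 2 * ((t%:R / m%:R) `^ (t%:R / 2)).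
Proof.
apply: le_trans (prob_return_le _ _ _ hm) _.
by rewrite ler_peMl ?powR_ge0 ?ler1n.
Qed.
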